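(* Let $n$ be an odd positive integer. Then for every integer $\ell\ge 2$, \[\max(n,\ell)=\binom{n}{2}-\left\lfloor\frac{n}{2}\right\rfloor.\] Moreover, $\overline{M_n}$ is (up to isomorphism) the unique $N$-AW graph of maximum size on $n$ vertices.
   Context: All graphs are finite and simple; $\overline{G}$ is the complement of $G$. Vertex labels lie in $\mathbb{Z}_\ell$. In the neighborhood Lights Out game on $G$, toggling a vertex $v$ adds $1$ (mod $\ell$) to the label of each vertex of the closed neighborhood $N[v]$; the game is won when all labels are $0$. $G$ is $N$-AW if the game can be won from every initial labeling $V(G)\to\mathbb{Z}_\ell$. $\max(n,\ell)$ is the maximum number of edges of an $N$-AW graph on $n$ vertices. For odd $n$, $M_n$ denotes a near-perfect matching on $n$ vertices: $(n-1)/2$ disjoint edges together with one isolated vertex. *)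

From mathcomp Require Import all_boot all_order all_algebra.
From mathcomp Require Import fingroup perm.
Set Implicit Arguments. Unset Strict Implicit. Unset Printing Implicit Defensive.
Import GRing.Theory.
Local Open Scope ring_scope.

Definition simple_graph (n : nat) (e : rel 'I_n) : Prop :=
  symmetric e /\ irreflexive e.

Definition nedges (n : nat) (e : rel 'I_n) : nat :=
  #|[set p : 'I_n * 'I_n | (p.1 < p.2)%N && e p.1 p.2]|.

Definition in_closed_nbhd (n : nat) (e : rel 'I_n) (u v : 'I_n) : bool :=
  (v == u) || e u v.

(* Labels after performing the sequence of toggles s from labeling f:
   each toggle of u adds 1 (mod l) to every vertex of N[u]. *)
Definition after_toggles (n l : nat) (e : rel 'I_n) (f : 'I_n -> 'Z_l)
    (s : seq 'I_n) (v : 'I_n) : 'Z_l :=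
  f v + (count (fun u => in_closed_nbhd e u v) s)%:R.

(* N-AW ("always winnable") for the neighborhood Lights Out game over Z_l. *)
Definition NAW (n l : nat) (e : rel 'I_n) : Prop :=
  forall f : 'I_n -> 'Z_l, exists s : seq 'I_n,
    forall v : 'I_n, after_toggles e f s v = 0%R.

Definition gcompl (n : nat) (e : rel 'I_n) : rel 'I_n :=
  fun u v => (u != v) && ~~ e u v.

(* Near-perfect matching M_n (n odd): edges {2i, 2i+1} for 2i+1 < n;
   the vertex n-1 is isolated. *)
Definition Mn (n : nat) : rel 'I_n :=
  fun u v => (u != v) && ((val u)./2 == (val v)./2).

Definition isomorphic (n : nat) (e h : rel 'I_n) : Prop :=
  exists p : {perm 'I_n}, forall u v, e u v = h (p u) (p v).

Arguments NAW {n} l e.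
Arguments after_toggles {n l} e f s v.
Arguments Mn n : clear implicits.

From mathcomp Require Import all_boot all_order all_algebra.
From mathcomp Require Import fingroup perm zify.
Set Implicit Arguments. Unset Strict Implicit. Unset Printing Implicit Defensive.
Import GRing.Theory.

(* Two universal vertices of an N-AW graph e cannot exist: both lie in every
   closed neighbourhood, so every toggle changes their labels alike, and the
   labeling that is 1 on one of them and 0 elsewhere is never won.  Hence the
   complement of e has at most one isolated vertex, thus at least (n-1)/2
   edges, with equality only when it is a matching missing exactly one vertex,
   i.e. a copy of M_n.  Conversely, in the complement of M_n the closed
   neighbourhood of v is everything but the partner of v, so the numbers of
   toggles winning a given labeling can be written down explicitly. *)

Lemma sum_ord_ltn m k : \sum_(i < m) (i < k) = minn k m.
Proof.
elim: m => [|m IHm]; first by rewrite big_ord0; lia.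
by rewrite big_ord_recr /= IHm; case: ltnP; lia.
Qed.

Section Graphs.

Variable n : nat.
Implicit Types (c e : rel 'I_n) (u v w : 'I_n).

Definition degree c u : nat := \sum_(v : 'I_n) c u v.

Lemma degree_eq0P c u : reflect (forall v, ~~ c u v) (degree c u == 0).
Proof.
rewrite /degree sum_nat_eq0; apply: (iffP forallP) => h v.
  by have := h v; case: (c u v).
by rewrite (negbTE (h v)).
Qed.

Lemma adj_uniq_of_degree_le1 c u v w :
  degree c u <= 1 -> c u v -> c u w -> v = w.
Proof.
move=> deg_le1 cuv cuw; apply/eqP; apply: contraTT deg_le1 => neq_vw.
by rewrite /degree (bigD1 v) // (bigD1 w) 1?eq_sym //= cuv cuw.
Qed.

Lemma sum_degree_ge c :
  (forall u v, degree c u = 0 -> degree c v = 0 -> u = v) ->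
  n.-1 + \sum_(u : 'I_n) (degree c u).-1 <= \sum_(u : 'I_n) degree c u.
Proof.
move=> isolated_uniq.
have -> : \sum_(u : 'I_n) degree c u =
    \sum_(u : 'I_n) (0 < degree c u) + \sum_(u : 'I_n) (degree c u).-1.
  by rewrite -big_split; apply: eq_bigr => u _; case: degree.
pose isolated := [set u | degree c u == 0].
have isolated_le1 : #|isolated| <= 1.
  by apply/card_le1_eqP => u v; rewrite !inE => /eqP du /eqP dv; apply: isolated_uniq.
have -> : \sum_(u : 'I_n) (0 < degree c u) = #|~: isolated|.
  rewrite -sum1_card [RHS]big_mkcond; apply: eq_bigr => u _.
  by rewrite !inE lt0n; case: eqP.
by have := cardsC isolated; rewrite card_ord leq_add2r; lia.
Qed.

Lemma nedgesE c : nedges c = \sum_(u : 'I_n) \sum_(v : 'I_n) ((u < v) && c u v).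
Proof.
rewrite /nedges pair_bigA /= -sum1_card big_mkcond /=; apply: eq_bigr => p _.
by rewrite inE; case: (_ && _).
Qed.

Lemma sum_degree c :
  symmetric c -> irreflexive c -> \sum_(u : 'I_n) degree c u = (nedges c).*2.
Proof.
move=> c_sym c_irr; rewrite nedgesE -addnn [X in _ = _ + X]exchange_big /=.
rewrite -big_split; apply: eq_bigr => u _; rewrite -big_split; apply: eq_bigr => v _ /=.
rewrite [c v u]c_sym; case: ltngtP => [||/val_inj->] //=; by rewrite ?addn0 ?c_irr.
Qed.

Lemma nedges_gcompl e : nedges e + nedges (gcompl e) = 'C(n, 2).
Proof.
rewrite !nedgesE -big_split -bin2_sum big_mkord /=.
rewrite (eq_bigr _ (fun u _ => esym (big_split _ _ _ _ _))) exchange_big /=.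
apply: eq_bigr => v _; rewrite -[RHS](minn_idPl (ltnW (ltn_ord v))) -sum_ord_ltn.
apply: eq_bigr => u _; rewrite /gcompl.
by case: ltngtP => // lt_uv; rewrite neq_ltn lt_uv; case: (e u v).
Qed.

Lemma gcompl_simple e : symmetric e -> simple_graph (gcompl e).
Proof.
by move=> e_sym; split=> [u v | u]; rewrite /gcompl ?eqxx // eq_sym e_sym.
Qed.

Lemma in_closed_nbhd_gcompl c u v :
  irreflexive c -> in_closed_nbhd (gcompl c) u v = ~~ c u v.
Proof.
move=> c_irr; rewrite /in_closed_nbhd /gcompl eq_sym.
by case: eqVneq => [->|]; rewrite ?c_irr.
Qed.

Lemma isomorphic_gcompl e h :
  irreflexive e -> isomorphic (gcompl e) h -> isomorphic e (gcompl h).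
Proof.
move=> e_irr [p iso_p]; exists p => u v; rewrite /gcompl (inj_eq perm_inj) -iso_p.
by rewrite /gcompl; case: eqP => [->|_]; rewrite ?e_irr //= negbK.
Qed.

Lemma NAW_gcompl_isolated_uniq l e u v : symmetric e -> NAW l e ->
  degree (gcompl e) u = 0 -> degree (gcompl e) v = 0 -> u = v.
Proof.
move=> e_sym e_NAW /eqP/degree_eq0P u_univ /eqP/degree_eq0P v_univ.
have toggled_always w : (forall x, ~~ gcompl e w x) ->
    forall s, count (in_closed_nbhd e^~ w) s = size s.
  move=> w_univ s; rewrite -count_predT; apply: eq_count => x.
  have := w_univ x; rewrite /in_closed_nbhd /gcompl e_sym eq_sym.
  by case: (x == w); case: (e x w).
have [s s_wins] := e_NAW (fun w => (w == u)%:R%R).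
apply/eqP; apply: contraTT (oner_neq0 'Z_l) => neq_uv; rewrite negbK.
move: (s_wins u) (s_wins v); rewrite /after_toggles.
rewrite !toggled_always // eqxx eq_sym (negbTE neq_uv) /= add0r => s_u s_v.
by rewrite -s_u s_v addr0.
Qed.

Lemma NAW_of_toggle_counts l e :
  (forall f : 'I_n -> 'Z_l, exists x : 'I_n -> 'Z_l,
     forall v, (f v + \sum_(u | in_closed_nbhd e u v) x u = 0)%R) ->
  NAW l e.
Proof.
move=> solvable f; have [x x_wins] := solvable f.
exists (flatten [seq nseq (x u) u | u <- enum 'I_n]) => v.
rewrite /after_toggles -[RHS](x_wins v); congr (_ + _)%R.
rewrite count_flatten -map_comp sumnE big_map big_enum natr_sum /= [RHS]big_mkcond.
apply: eq_bigr => u _; rewrite count_nseq.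
by case: (in_closed_nbhd e u v); rewrite ?mul1n ?mul0n ?natr_Zp.
Qed.

End Graphs.

Section Matching.

Variables (n : nat) (c : rel 'I_n).
Hypotheses (c_sym : symmetric c) (c_irr : irreflexive c).
Hypothesis c_adj_uniq : forall u v w, c u v -> c u w -> v = w.
Hypothesis isolated_uniq : forall u v, degree c u = 0 -> degree c v = 0 -> u = v.
Implicit Types (u v w : 'I_n).

Definition partner u : 'I_n := odflt u [pick v | c u v].

Lemma partner_adj u v : c u v -> partner u = v.
Proof.
move=> cuv; rewrite /partner; case: pickP => [v' cuv'|/(_ v)]; last by rewrite cuv.
exact: c_adj_uniq cuv' cuv.
Qed.

Lemma adj_partner u : degree c u != 0 -> c u (partner u).
Proof.
rewrite /partner; case: pickP => [//|none]; apply: contraNT => _.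
by apply/degree_eq0P => v; rewrite none.
Qed.

Lemma partner_isolated u : degree c u = 0 -> partner u = u.
Proof.
move=> /eqP/degree_eq0P u_isolated; rewrite /partner.
by case: pickP => // v; rewrite (negbTE (u_isolated v)).
Qed.

Lemma partnerK u : partner (partner u) = u.
Proof.
have [/eqP u_isolated|/adj_partner cu] := boolP (degree c u == 0).
  by rewrite !partner_isolated.
by apply: partner_adj; rewrite c_sym.
Qed.

Lemma adj_partnerE u v : degree c u != 0 -> c u v = (v == partner u).
Proof.
move=> u_nonisolated; apply/idP/eqP => [/partner_adj //|->].
exact: adj_partner.
Qed.

Lemma sum_degree_matching w : degree c w = 0 -> \sum_(u : 'I_n) degree c u = n.-1.
Proof.
move=> w_isolated.
rewrite -[in RHS](card_ord n) -(cardC1 w) -sum1_card [RHS]big_mkcond /=.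
apply: eq_bigr => u _; rewrite !inE; case: eqVneq => [->//|neq_uw].
have u_nonisolated : degree c u != 0.
  by apply: contra_neq neq_uw => /isolated_uniq; apply.
rewrite /degree (bigD1 (partner u)) ?adj_partner //= big1 // => v.
by rewrite adj_partnerE // => /negbTE ->.
Qed.

Lemma NAW_gcompl_matching l w : degree c w = 0 -> NAW l (gcompl c).
Proof.
move=> w_isolated; apply: NAW_of_toggle_counts => f.
(* With t toggles in total, v != w gains t - x (partner v) and w gains t. *)
pose t := (- f w)%R.
pose x u := if u == w then (t - \sum_(v | v != w) (t + f (partner v)))%R
            else (t + f (partner u))%R.
exists x => v.
have sum_x : (\sum_u x u = t)%R.
  rewrite (bigD1 w) //= [X in (_ + X)%R](eq_bigr (fun u => t + f (partner u)))%R.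
    by rewrite /x eqxx subrK.
  by move=> u /negbTE; rewrite /x => ->.
have -> : (\sum_(u | in_closed_nbhd (gcompl c) u v) x u
           = t - \sum_(u | c u v) x u)%R.
  rewrite -sum_x [X in (X - _)%R](bigID (fun u => c u v)) /= addrAC subrr add0r.
  by apply: eq_bigl => u; rewrite in_closed_nbhd_gcompl.
have [->|neq_vw] := eqVneq v w.
  rewrite big_pred0 ?subr0 ?addrN // => u.
  by apply/negbTE; rewrite c_sym; apply/degree_eq0P/eqP.
have v_nonisolated : degree c v != 0.
  by apply: contra_neq neq_vw => /isolated_uniq; apply.
rewrite (big_pred1 (partner v)) => [|u]; last by rewrite c_sym adj_partnerE.
have neq_pv_w : partner v != w.
  apply: contraTneq (adj_partner v_nonisolated) => ->.
  by rewrite c_sym; move: w_isolated => /eqP/degree_eq0P.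
by rewrite /x (negbTE neq_pv_w) partnerK opprD addNKr addrN.
Qed.

Section Labelling.

Hypothesis n_odd : odd n.

Definition matched_lefts : seq 'I_n :=
  [seq u : 'I_n <- enum 'I_n | u < partner u].

Definition edge_rep u : 'I_n := if u < partner u then u else partner u.

(* The i-th edge of matched_lefts goes to {2i, 2i+1}, the isolated vertex to
   n - 1: this is the relabelling of c onto M_n. *)
Definition label u : nat :=
  if degree c u == 0 then n.-1
  else (partner u < u) + (index (edge_rep u) matched_lefts).*2.

Lemma edge_rep_orbit u : u = edge_rep u \/ u = partner (edge_rep u).
Proof. by rewrite /edge_rep; case: ifP; [left | right; rewrite partnerK]. Qed.

Lemma edge_rep_partner u : edge_rep (partner u) = edge_rep u.
Proof. by rewrite /edge_rep partnerK; case: ltngtP => // /val_inj ->. Qed.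

Lemma adj_edge_rep u : degree c u != 0 -> c (edge_rep u) (partner (edge_rep u)).
Proof.
move=> /adj_partner cu; rewrite /edge_rep; case: ifP => // _.
by rewrite partnerK c_sym.
Qed.

Lemma edge_rep_lefts u : degree c u != 0 -> edge_rep u \in matched_lefts.
Proof.
move=> u_nonisolated; rewrite mem_filter mem_enum andbT /edge_rep.
have neq_u_pu : u != partner u.
  by apply: contraTneq (adj_partner u_nonisolated) => <-; rewrite c_irr.
case: ifP => // u_ge_pu; rewrite partnerK.
by move: neq_u_pu u_ge_pu; case: ltngtP => // /val_inj <-; rewrite eqxx.
Qed.

Lemma size_matched_lefts : size matched_lefts <= n./2.
Proof.
have lefts_uniq : uniq (matched_lefts ++ map partner matched_lefts).
  rewrite cat_uniq map_inj_uniq; last exact: can_inj partnerK.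
  rewrite /matched_lefts filter_uniq ?enum_uniq //= andbT.
  apply/hasPn => _ /mapP [u u_left ->]; move: u_left.
  rewrite !mem_filter partnerK => /andP [/ltnW u_le_pu _].
  by rewrite ltnNge u_le_pu.
have := uniq_leq_size lefts_uniq (fun u _ => mem_enum _ u).
by rewrite size_cat size_map size_enum_ord addnn => /half_leq; rewrite doubleK.
Qed.

Lemma half_label u : (label u)./2 =
  if degree c u == 0 then n./2 else index (edge_rep u) matched_lefts.
Proof.
rewrite /label; case: eqP => _; last by rewrite half_bit_double.
by rewrite -{1}(odd_double_half n) n_odd add1n /= doubleK.
Qed.

Lemma index_edge_rep_lt u :
  degree c u != 0 -> index (edge_rep u) matched_lefts < n./2.
Proof.
move=> /edge_rep_lefts; rewrite -index_mem => /leq_trans; apply.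
exact: size_matched_lefts.
Qed.

Lemma label_lt u : label u < n.
Proof.
rewrite /label; case: eqP => [_|/eqP /index_edge_rep_lt]; first by case: n n_odd.
by have := odd_double_half n; case: (partner u < u) => /=; lia.
Qed.

Lemma adj_label u v : u != v -> c u v = ((label u)./2 == (label v)./2).
Proof.
move=> neq_uv; rewrite !half_label.
have [u_isolated|u_nonisolated] := boolP (degree c u == 0);
  have [v_isolated|v_nonisolated] := boolP (degree c v == 0).
- by move: neq_uv; rewrite (isolated_uniq (eqP u_isolated) (eqP v_isolated)) eqxx.
- rewrite (negbTE (degree_eq0P _ _ u_isolated v)) eq_sym.
  by rewrite ltn_eqF ?index_edge_rep_lt.
- rewrite c_sym (negbTE (degree_eq0P _ _ v_isolated u)).
  by rewrite ltn_eqF ?index_edge_rep_lt.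
apply/idP/eqP => [/partner_adj <-|]; first by rewrite edge_rep_partner.
move/(index_inj u (edge_rep_lefts u_nonisolated) (edge_rep_lefts v_nonisolated)).
move=> eq_rep; case: (edge_rep_orbit u) (edge_rep_orbit v) neq_uv => -> [] ->.
all: rewrite eq_rep ?eqxx // => _.
- exact: adj_edge_rep.
- by rewrite c_sym adj_edge_rep.
Qed.

Lemma label_inj : injective label.
Proof.
move=> u v eq_label; apply/eqP/negPn/negP => neq_uv.
have cuv : c u v by rewrite adj_label // eq_label.
have u_nonisolated : degree c u != 0.
  by apply/negP => /degree_eq0P/(_ v); rewrite cuv.
have v_nonisolated : degree c v != 0.
  by apply/negP => /degree_eq0P/(_ u); rewrite c_sym cuv.
move: (congr1 odd eq_label).
rewrite /label (negbTE u_nonisolated) (negbTE v_nonisolated).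
rewrite !oddD !odd_double (partner_adj cuv) -(partner_adj cuv) partnerK /=.
rewrite !addbF !oddb; case: ltngtP => // /val_inj.
by rewrite (partner_adj cuv) => eq_vu; rewrite eq_vu eqxx in neq_uv.
Qed.

Lemma matching_isomorphic_Mn : isomorphic c (Mn n).
Proof.
pose p u : 'I_n := Ordinal (label_lt u).
have p_inj : injective p by move=> u v /(congr1 val) /label_inj.
exists (perm p_inj) => u v; rewrite /Mn !permE (inj_eq p_inj) /=.
by case: eqVneq => [->|/adj_label //]; rewrite c_irr.
Qed.

End Labelling.
End Matching.

Section NearPerfectMatching.

Variable n : nat.
Implicit Types (u v w : 'I_n).

Lemma Mn_sym : symmetric (Mn n).
Proof. by move=> u v; rewrite /Mn eq_sym [_./2 == _]eq_sym. Qed.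

Lemma Mn_irr : irreflexive (Mn n).
Proof. by move=> u; rewrite /Mn eqxx. Qed.

Lemma Mn_adj_uniq u v w : Mn n u v -> Mn n u w -> v = w.
Proof.
rewrite /Mn -!val_eqE /= => /andP [/eqP neq_uv /eqP half_v].
move=> /andP [/eqP neq_uw /eqP half_w]; apply/eqP; rewrite -val_eqE /=; apply/eqP.
by move: (odd_double_half u) (odd_double_half v) (odd_double_half w); lia.
Qed.

Hypothesis n_odd : odd n.

Lemma Mn_degree_eq0 u : (degree (Mn n) u == 0) = (u.+1 == n).
Proof.
have := odd_double_half n; rewrite n_odd => n_eq.
apply/degree_eq0P/eqP => [u_isolated | u_last v].
  apply/eqP; rewrite eqn_leq ltn_ord /=; apply: contraT; rewrite -ltnNge => u_lt.
  have v_lt : ~~ odd u + u./2.*2 < n.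
    by move: (odd_double_half u); case: (odd u) => /=; lia.
  move: (u_isolated (Ordinal v_lt)); rewrite /Mn -val_eqE /= half_bit_double eqxx andbT.
  by rewrite -{1}(odd_double_half u) eqn_add2r; case: (odd u).
rewrite /Mn -val_eqE /=; apply/negP => /andP [/eqP neq_uv /eqP half_v].
apply: neq_uv.
by move: (odd_double_half u) (odd_double_half v) (ltn_ord v); lia.
Qed.

Lemma Mn_isolated_uniq u v : degree (Mn n) u = 0 -> degree (Mn n) v = 0 -> u = v.
Proof.
move=> /eqP; rewrite Mn_degree_eq0 => /eqP u_last.
move=> /eqP; rewrite Mn_degree_eq0 => /eqP v_last.
by apply/eqP; rewrite -val_eqE /=; apply/eqP; lia.
Qed.

End NearPerfectMatching.

Lemma NAW_gcompl_Mn n l : odd n -> NAW l (gcompl (Mn n)).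
Proof.
case: n => [//|m] n_odd.
apply: (NAW_gcompl_matching (@Mn_sym _) (@Mn_irr _) (@Mn_adj_uniq _)
          (Mn_isolated_uniq n_odd) (w := ord_max)).
by apply/eqP; rewrite Mn_degree_eq0.
Qed.

Lemma nedges_Mn n : odd n -> nedges (Mn n) = n./2.
Proof.
case: n => [//|m] n_odd; apply/double_inj.
rewrite -sum_degree; [|exact: Mn_sym | exact: Mn_irr].
rewrite (sum_degree_matching (@Mn_adj_uniq _) (Mn_isolated_uniq n_odd)
           (w := ord_max)).
  by have := odd_double_half m.+1; rewrite n_odd; lia.
by apply/eqP; rewrite Mn_degree_eq0.
Qed.

Lemma NAW_nedges_gcompl_ge n l (e : rel 'I_n) :
  odd n -> simple_graph e -> NAW l e ->
  (n./2).*2 + \sum_(u : 'I_n) (degree (gcompl e) u).-1 <= (nedges (gcompl e)).*2.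
Proof.
move=> n_odd [e_sym _] e_NAW; have [ce_sym ce_irr] := gcompl_simple e_sym.
have -> : (n./2).*2 = n.-1 by have := odd_double_half n; rewrite n_odd; lia.
rewrite -sum_degree //.
apply: sum_degree_ge => u v; exact: NAW_gcompl_isolated_uniq.
Qed.

Theorem proposition4p2 (n l : nat) :
  odd n -> (2 <= l)%N ->
  (* max(n,l) = C(n,2) - floor(n/2): upper bound ... *)
  (forall e : rel 'I_n, simple_graph e -> NAW l e ->
     (nedges e <= 'C(n, 2) - n./2)%N) /\
  (* ... attained by the complement of M_n, which is N-AW ... *)
  (simple_graph (gcompl (Mn n)) /\ NAW l (gcompl (Mn n)) /\
   nedges (gcompl (Mn n)) = ('C(n, 2) - n./2)%N) /\
  (* ... and it is the unique such graph up to isomorphism. *)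
  (forall e : rel 'I_n, simple_graph e -> NAW l e ->
     nedges e = ('C(n, 2) - n./2)%N -> isomorphic e (gcompl (Mn n))).
Proof.
move=> n_odd _; split; [|split].
- move=> e e_simple e_NAW; have := NAW_nedges_gcompl_ge n_odd e_simple e_NAW.
  by have := nedges_gcompl e; lia.
- split; [exact: gcompl_simple (@Mn_sym _) | split; first exact: NAW_gcompl_Mn].
  by have := nedges_gcompl (Mn n); rewrite nedges_Mn //; lia.
move=> e e_simple e_NAW e_max; case: (e_simple) => e_sym e_irr.
have [ce_sym ce_irr] := gcompl_simple e_sym.
have : \sum_(u : 'I_n) (degree (gcompl e) u).-1 == 0.
  by have := NAW_nedges_gcompl_ge n_odd e_simple e_NAW; have := nedges_gcompl e; lia.
rewrite sum_nat_eq0 => /forallP degree_le1.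
apply: isomorphic_gcompl e_irr _; apply: matching_isomorphic_Mn ce_sym ce_irr _ _ n_odd.
- move=> u v w; apply: adj_uniq_of_degree_le1.
  by move/eqP: (degree_le1 u); case: degree => [|[]].
- move=> u v; exact: NAW_gcompl_isolated_uniq.
Qed.
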